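(* Let $S,T,V$ be ordered trees and let $i\colon S\to T$ and $j\colon T\to V$ be embeddings. Let $x$ be a leaf of $S$, $y$ a leaf of $T$ and $z$ a leaf of $V$. If $y$ is $i$-conjugate to $x$ and $z$ is $j$-conjugate to $y$, then $z$ is $(j\circ i)$-conjugate to $x$.
   Context: A tree is a finite, non-empty poset $(T,\sqsubseteq_T)$ with a smallest element (root) in which the predecessors of each element form a chain (each element is its own predecessor); $v\wedge_T w$ is the largest common predecessor. An ordered tree has a fixed linear order on the immediate successors of each node, inducing the lexicographic linear order $\leq_T$: $v\leq_T w$ if $v\sqsubseteq_T w$, and for incomparable $v,w$, $v\leq_T w$ iff the immediate successor of $v\wedge_T w$ below $v$ precedes the one below $w$. A morphism preserves $\wedge$, is $\leq$-monotone and maps root to root; an embedding is an injective morphism. A leaf is a $\sqsubseteq$-maximal node. For an embedding $i\colon S\to T$, a leaf $y$ of $T$ is $i$-conjugate to a leaf $x$ of $S$ if: (i) when $x$ is the $\leq_S$-largest leaf of $S$, $y$ is the $\leq_T$-largest leaf of $T$; (ii) otherwise, letting $x'$ be the $\leq_S$-smallest leaf of $S$ with $x<_S x'$, $y$ is the $\leq_T$-largest leaf of $T$ such that $y<_T i(x')$ and $i(x)\wedge_T i(x')=y\wedge_T i(x')$. *)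

From mathcomp Require Import all_boot.
Set Implicit Arguments. Unset Strict Implicit. Unset Printing Implicit Defensive.

Section Generic.
Variable T : finType.

Definition isucc (le : rel T) (u v : T) : bool :=
  [&& le u v, u != v & [forall w, (le u w && le w v) ==> (w == u) || (w == v)]].

(* largest common predecessor of v and w (exists in a finite tree; root is a default) *)
Definition gmeet (le : rel T) (root : T) (v w : T) : T :=
  odflt root [pick m | [&& le m v, le m w &
                         [forall c, (le c v && le c w) ==> le c m]]].

(* lexicographic order induced by the sibling orders sib *)
Definition glex (le : rel T) (root : T) (sib : rel T) (v w : T) : bool :=
  le v w ||
  (~~ le w v &&
   [exists c, [exists c',
      [&& isucc le (gmeet le root v w) c, isucc le (gmeet le root v w) c',
          le c v, le c' w & sib c c']]]).
End Generic.

Record otree := OTree {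
  ot_sort :> finType;
  ot_le : rel ot_sort;
  ot_root : ot_sort;
  ot_sib : rel ot_sort;
  ot_le_refl : reflexive ot_le;
  ot_le_anti : antisymmetric ot_le;
  ot_le_trans : transitive ot_le;
  ot_root_min : forall v, ot_le ot_root v;
  ot_pred_chain : forall v a b, ot_le a v -> ot_le b v -> ot_le a b || ot_le b a;
  ot_sib_refl : forall u a, isucc ot_le u a -> ot_sib a a;
  ot_sib_anti : forall u a b, isucc ot_le u a -> isucc ot_le u b ->
      ot_sib a b -> ot_sib b a -> a = b;
  ot_sib_trans : forall u a b c, isucc ot_le u a -> isucc ot_le u b -> isucc ot_le u c ->
      ot_sib a b -> ot_sib b c -> ot_sib a c;
  ot_sib_total : forall u a b, isucc ot_le u a -> isucc ot_le u b ->
      ot_sib a b || ot_sib b a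
}.

Section OTreeDefs.
Variable S : otree.

Definition tle (v w : S) : bool := @ot_le S v w.
Definition tmeet (v w : S) : S := gmeet (@ot_le S) (@ot_root S) v w.
Definition tlex (v w : S) : bool := glex (@ot_le S) (@ot_root S) (@ot_sib S) v w.
Definition tltx (v w : S) : bool := tlex v w && (v != w).

Definition leaf (v : S) : Prop := forall w, tle v w -> w = v.

Definition greatest_leaf (P : S -> Prop) (y : S) : Prop :=
  [/\ leaf y, P y & forall y', leaf y' -> P y' -> tlex y' y].
Definition least_leaf (P : S -> Prop) (y : S) : Prop :=
  [/\ leaf y, P y & forall y', leaf y' -> P y' -> tlex y y'].
End OTreeDefs.

Definition morphism (S T : otree) (f : S -> T) : Prop :=
  [/\ forall v w : S, f (tmeet v w) = tmeet (f v) (f w),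
      forall v w : S, tlex v w -> tlex (f v) (f w)
    & f (ot_root S) = ot_root T].

Definition embedding (S T : otree) (f : S -> T) : Prop :=
  morphism f /\ injective f.

Definition conjugate (S T : otree) (i : S -> T) (x : S) (y : T) : Prop :=
  (greatest_leaf (fun _ => True) x -> greatest_leaf (fun _ => True) y) /\
  (~ greatest_leaf (fun _ => True) x ->
     exists x' : S, least_leaf (fun x' => tltx x x') x' /\
       greatest_leaf (fun y' => tltx y' (i x') /\
                                tmeet (i x) (i x') = tmeet y' (i x')) y).

From mathcomp Require Import all_boot.
Set Implicit Arguments. Unset Strict Implicit. Unset Printing Implicit Defensive.

(* Write < for the lexicographic order.  If M is strictly below b, the leaves
   l with l < b and l ∧ b = M are exactly the leaves lying in a branch at M to
   the left, in the sibling order, of the branch containing b; so this set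
   depends only on M and on any node D with M < D ⊑ b.
   Let m = i(x) ∧ i(x') and c the branch of i(x') at m.  Then y is the last
   leaf to the left of c at m and, subtrees being intervals of the
   lexicographic order, the next leaf y' lies above c.  Hence y ∧ y' = m, and
   with M = j(m), D = j(c) the conditions defining z relative to j(y') and
   relative to j(i(x')) coincide. *)

Section OrderedTree.
Variable S : otree.
Implicit Types u v w b c e f l m : S.
Local Notation succ := (isucc (@ot_le S)).

Lemma tle_refl v : tle v v. Proof. exact: ot_le_refl. Qed.

Lemma tle_anti u v : tle u v -> tle v u -> u = v.
Proof. by move=> uv vu; apply: (@ot_le_anti S); apply/andP. Qed.

Lemma tle_trans u v w : tle u v -> tle v w -> tle u w.
Proof. exact: (@ot_le_trans S v u w). Qed.

Lemma tle_total_below a b v : tle a v -> tle b v -> tle a b || tle b a.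
Proof. exact: ot_pred_chain. Qed.

Definition depth v := #|[pred t | tle t v]|.

Lemma depth_le_eq u v : tle u v -> depth v <= depth u -> u = v.
Proof.
move=> uv; apply: contraTeq => neq; rewrite -ltnNge; apply/proper_card/properP; split.
  by apply/subsetP => t; rewrite !inE => /tle_trans; apply.
by exists v; rewrite !inE ?tle_refl //; apply: contra_neqN neq; apply: tle_anti.
Qed.

Lemma meet_exists v w : exists m,
  [&& tle m v, tle m w & [forall c, (tle c v && tle c w) ==> tle c m]].
Proof.
pose P u := tle u v && tle u w.
have root_below : P (ot_root S) by rewrite /P /tle !ot_root_min.
have [m /andP[mv mw] m_max] := arg_maxnP depth root_below.
exists m; rewrite mv mw; apply/forallP => c; apply/implyP => /andP[cv cw].
have Pc : P c by rewrite /P cv cw.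
case/orP: (tle_total_below mv cv) => [mc|//].
by rewrite (depth_le_eq mc (m_max c Pc)) tle_refl.
Qed.

Lemma tmeetP v w : [/\ tle (tmeet v w) v, tle (tmeet v w) w &
  forall c, tle c v -> tle c w -> tle c (tmeet v w)].
Proof.
rewrite /tmeet /gmeet; case: pickP => [m /and3P[mv mw /forallP m_max] | none].
  by split=> // c cv cw; move: (m_max c); rewrite /tle in cv cw *; rewrite cv cw.
by have [m] := meet_exists v w; rewrite none.
Qed.

Lemma meet_l v w : tle (tmeet v w) v. Proof. by case: (tmeetP v w). Qed.
Lemma meet_r v w : tle (tmeet v w) w. Proof. by case: (tmeetP v w). Qed.

Lemma meet_glb v w c : tle c v -> tle c w -> tle c (tmeet v w).
Proof. by case: (tmeetP v w) => _ _; apply. Qed.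

Lemma meet_eq v w m : tle m v -> tle m w ->
  (forall c, tle c v -> tle c w -> tle c m) -> tmeet v w = m.
Proof.
move=> mv mw m_max; apply: tle_anti (meet_glb mv mw) => //.
by apply: m_max; [apply: meet_l | apply: meet_r].
Qed.

Lemma tle_meet v w : tle v w -> tmeet v w = v.
Proof. by move=> vw; apply: meet_eq (tle_refl v) vw _ => c. Qed.

Lemma succ_le u c : succ u c -> tle u c.
Proof. by case/and3P. Qed.

Lemma succ_neq u c : succ u c -> u != c.
Proof. by case/and3P. Qed.

Lemma succ_below u c p : succ u c -> tle p c -> p != c -> tle p u.
Proof.
case/and3P=> uc _ /forallP between pc neq.
case/orP: (tle_total_below pc uc) => [//|up].
move: (between p); rewrite /tle in up pc; rewrite up pc /= (negbTE neq) orbF.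
by move=> /eqP->; apply: tle_refl.
Qed.

Lemma succ_not_below u c : succ u c -> ~~ tle c u.
Proof. by move=> hc; apply: contra_neqN (succ_neq hc); apply: tle_anti (succ_le hc). Qed.

Lemma succ_uniq u c1 c2 v : succ u c1 -> succ u c2 -> tle c1 v -> tle c2 v -> c1 = c2.
Proof.
move=> h1 h2 c1v c2v; apply/eqP/negPn/negP => neq.
case/orP: (tle_total_below c1v c2v) => [c12|c21].
  by have := succ_not_below h1; rewrite (succ_below h2 c12 neq).
by have := succ_not_below h2; rewrite (succ_below h1 c21) // eq_sym.
Qed.

Lemma branch_exists m v : tle m v -> m != v -> exists2 c, succ m c & tle c v.
Proof.
move=> mv neq; pose P c := [&& tle m c, c != m & tle c v].
have Pv : P v by rewrite /P mv tle_refl eq_sym neq.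
have [c /and3P[mc cm cv] c_min] := arg_minnP depth Pv.
exists c => //; apply/and3P; split; rewrite 1?eq_sym //.
apply/forallP => w; apply/implyP => /andP[mw wc].
have [//|wm] := eqVneq w m.
have Pw : P w by apply/and3P; split=> //; apply: tle_trans wc cv.
by rewrite (depth_le_eq wc (c_min w Pw)) eqxx orbT.
Qed.

Lemma leaf_exists v : exists2 l, leaf l & tle v l.
Proof.
have [l vl l_max] := arg_maxnP depth (tle_refl v).
by exists l => // w lw; rewrite (depth_le_eq lw (l_max w (tle_trans vl lw))).
Qed.

Lemma meet_branches u e f v w : succ u e -> succ u f -> e != f ->
  tle e v -> tle f w -> tmeet v w = u.
Proof.
move=> he hf ef ev fw.
have new : ~~ tle e w by apply: contra_neqN ef => ew; apply: succ_uniq he hf ew fw.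
apply: meet_eq => [||q qv qw]; first exact: tle_trans (succ_le he) ev.
  exact: tle_trans (succ_le hf) fw.
case/orP: (tle_total_below qv ev) => [qe|eq_]; last by rewrite (tle_trans eq_ qw) in new.
by apply: succ_below he qe _; apply: contraNneq new => <-.
Qed.

Lemma tlex_branches u e f v w : succ u e -> succ u f -> e != f ->
  tle e v -> tle f w -> tlex v w = ot_sib e f.
Proof.
move=> he hf ef ev fw; have m_vw := meet_branches he hf ef ev fw.
have nvw : ~~ tle v w.
  by apply: contra_neqN ef => vw; apply: succ_uniq he hf (tle_trans ev vw) fw.
have nwv : ~~ tle w v.
  by apply: contra_neqN ef => wv; apply: succ_uniq he hf ev (tle_trans fw wv).
rewrite /tlex /glex -/(tle v w) -/(tle w v) -/(tmeet v w) m_vw (negbTE nvw) nwv /=.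
apply/existsP/idP => [[c /existsP[c' /and5P[hc hc' cv c'w]]] | sef].
  by rewrite (succ_uniq he hc ev cv) (succ_uniq hf hc' fw c'w).
by exists e; apply/existsP; exists f; apply/and5P.
Qed.

Lemma tltx_branches u e f v w : succ u e -> succ u f -> e != f ->
  tle e v -> tle f w -> tltx v w = ot_sib e f.
Proof.
move=> he hf ef ev fw; rewrite /tltx (tlex_branches he hf ef ev fw).
suff -> : v != w by rewrite andbT.
by apply: contra_neq ef => vw; apply: succ_uniq he hf ev _; rewrite vw.
Qed.

Lemma tlex_ancestor v w : tle w v -> tlex v w = tle v w.
Proof. by move=> wv; rewrite /tlex /glex -/(tle w v) wv /= orbF. Qed.

Lemma branches_meet_neq v w e f : succ (tmeet v w) e -> succ (tmeet v w) f ->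
  tle e v -> tle f w -> e != f.
Proof.
move=> he hf ev fw; apply: contraNneq (succ_not_below he) => ef.
by apply: meet_glb ev _; rewrite ef.
Qed.

Lemma sib_asym u e f : succ u e -> succ u f -> e != f -> ot_sib e f -> ~~ ot_sib f e.
Proof. by move=> he hf ef sef; apply: contra_neqN ef; apply: ot_sib_anti he hf sef. Qed.

Lemma tlex_anti v w : tlex v w -> tlex w v -> v = w.
Proof.
case: (boolP (tle v w)) => [vw _|nvw]; first by rewrite tlex_ancestor // => /(tle_anti vw).
case: (boolP (tle w v)) => [wv|nwv]; first by rewrite tlex_ancestor // (negbTE nvw).
have mv : tmeet v w != v by apply: contraNneq nvw => <-; apply: meet_r.
have mw : tmeet v w != w by apply: contraNneq nwv => <-; apply: meet_l.
have [e he ev] := branch_exists (meet_l v w) mv.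
have [f hf fw] := branch_exists (meet_r v w) mw.
have ef := branches_meet_neq he hf ev fw.
rewrite (tlex_branches he hf ef ev fw) (tlex_branches hf he _ fw ev) 1?eq_sym //.
by move=> /(sib_asym he hf ef)/negbTE->.
Qed.

Lemma tltx_tlexF v w : tltx v w -> tlex w v = false.
Proof. by case/andP=> vw neq; apply: contraNF neq => /(tlex_anti vw)->. Qed.

Lemma tlex_convex u v1 v2 v3 : tle u v1 -> tle u v3 ->
  tlex v1 v2 -> tlex v2 v3 -> tle u v2.
Proof.
move=> uv1 uv3 v12 v23; apply/negPn/negP => nuv2.
have [m_eq|m_neq] := eqVneq (tmeet u v2) v2.
  have v2v1 : tle v2 v1 by rewrite -m_eq (tle_trans (meet_l _ _) uv1).
  move: v12; rewrite tlex_ancestor // => v12.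
  by move: nuv2; rewrite -(tle_anti v12 v2v1) uv1.
have mu : tmeet u v2 != u by apply: contraNneq nuv2 => <-; apply: meet_r.
have [e he eu] := branch_exists (meet_l u v2) mu.
have [f hf fv2] := branch_exists (meet_r u v2) m_neq.
have ef := branches_meet_neq he hf eu fv2.
move: v12 v23; rewrite (tlex_branches he hf ef (tle_trans eu uv1) fv2).
rewrite (tlex_branches hf he _ fv2 (tle_trans eu uv3)) 1?eq_sym //.
by move=> /(sib_asym he hf ef)/negbTE->.
Qed.

Definition left_of_branch m c l : Prop :=
  exists2 e, succ m e & [/\ tle e l, e != c & ot_sib e c].

Lemma left_of_branchP m c b l : succ m c -> tle c b -> leaf l ->
  (tltx l b /\ m = tmeet l b) <-> left_of_branch m c l.
Proof.
move=> hc cb ll; split=> [[lb m_lb] | [e he [el ec sec]]]; last first.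
  by rewrite (tltx_branches he hc ec el cb) (meet_branches he hc ec el cb).
have ml : m != l.
  by apply: contra_neq (succ_neq hc) => ml; rewrite ml (ll c) // -ml (succ_le hc).
have ml_le : tle m l by rewrite m_lb meet_l.
have [e he el] := branch_exists ml_le ml.
have ec : e != c.
  by apply: contraNneq (succ_not_below he) => ec; rewrite m_lb meet_glb // ec.
by exists e => //; split; rewrite // -(tltx_branches he hc ec el cb).
Qed.

Lemma left_of_branch_not_last m c y : succ m c -> left_of_branch m c y ->
  ~ greatest_leaf (fun _ => True) y.
Proof.
move=> hc [e he [ey ec sec]] [_ _ y_max]; have [l ll cl] := leaf_exists c.
have yl : tltx y l by rewrite (tltx_branches he hc ec ey cl).
by have := y_max l ll I; rewrite (tltx_tlexF yl).
Qed.

Lemma next_leaf_in_branch m c y y' : succ m c ->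
  greatest_leaf (left_of_branch m c) y -> least_leaf (tltx y) y' -> tle c y'.
Proof.
move=> hc [_ [e he [ey ec sec]] y_max] [ly' yy' y'_min].
have [l ll cl] := leaf_exists c.
have yl : tltx y l by rewrite (tltx_branches he hc ec ey cl).
have y'l : tlex y' l := y'_min l ll yl.
have my' : tle m y'.
  apply: tlex_convex (tle_trans (succ_le he) ey) (tle_trans (succ_le hc) cl) _ y'l.
  by case/andP: yy'.
have my'_neq : m != y'.
  by apply: contra_neq (succ_neq hc) => my'_eq; rewrite (ly' c) -?my'_eq ?(succ_le hc).
have [f hf fy'] := branch_exists my' my'_neq.
have [<-//|fc] := eqVneq f c.
case/orP: (ot_sib_total hf hc) => [sfc|scf].
  by have := tltx_tlexF yy'; rewrite y_max //; exists f.
have ly'_lt : tltx l y' by rewrite (tltx_branches hc hf _ cl fy') // eq_sym.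
by move: y'l; rewrite (tltx_tlexF ly'_lt).
Qed.

Lemma left_of_meet_transfer M D b1 b2 l : tle M D -> M != D ->
  tle D b1 -> tle D b2 -> leaf l ->
  (tltx l b1 /\ M = tmeet l b1) <-> (tltx l b2 /\ M = tmeet l b2).
Proof.
move=> MD neq Db1 Db2 ll; have [c hc cD] := branch_exists MD neq.
apply: iff_trans (left_of_branchP hc (tle_trans cD Db1) ll) _.
exact: iff_sym (left_of_branchP hc (tle_trans cD Db2) ll).
Qed.

Lemma leaf_meet_neq v w : leaf w -> v != w -> tmeet v w != w.
Proof. by move=> lw; apply: contra_neq => m_eq; apply: lw; rewrite -m_eq meet_l. Qed.

End OrderedTree.

Lemma greatest_leaf_equiv (S : otree) (P Q : S -> Prop) y :
  (forall l, leaf l -> P l <-> Q l) -> greatest_leaf P y -> greatest_leaf Q y.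
Proof.
move=> PQ [ly Py y_max]; split=> // [|l ll /(PQ l ll)]; [exact/PQ | exact: y_max].
Qed.

Lemma morph_tle (S T : otree) (f : S -> T) v w :
  morphism f -> tle v w -> tle (f v) (f w).
Proof.
by case=> f_meet _ _ vw; rewrite -(tle_meet vw) f_meet meet_r.
Qed.

Theorem lemma4p13 (S T V : otree) (i : S -> T) (j : T -> V)
  (x : S) (y : T) (z : V) :
  embedding i -> embedding j ->
  leaf x -> leaf y -> leaf z ->
  conjugate i x y -> conjugate j y z ->
  conjugate (j \o i) x z.
Proof.
move=> [[i_meet _ _] inj_i] [hj inj_j] _ _ _ [cy1 cy2] [cz1 cz2].
split=> [/cy1/cz1 // | not_last_x]; have [x' [next_x' gy]] := cy2 not_last_x.
exists x'; split=> //=; set a := i x' in gy *; set m := tmeet (i x) a in gy *.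
have m_neq_a : m != a.
  case: next_x' => lx' /andP[_ xx'] _.
  by rewrite /m /a -i_meet (inj_eq inj_i) leaf_meet_neq.
have [c hc ca] := branch_exists (meet_r (i x) a) m_neq_a.
have gy' : greatest_leaf (left_of_branch m c) y.
  by apply: greatest_leaf_equiv gy => l ll; apply: left_of_branchP.
have [_ left_y _] := gy'; have [e he [ey ec _]] := left_y.
have [y' [next_y' gz]] := cz2 (left_of_branch_not_last hc left_y).
have cy' := next_leaf_in_branch hc gy' next_y'.
have [j_meet _ _] := hj.
have m_yy' : tmeet (j y) (j y') = tmeet (j (i x)) (j a).
  by rewrite -!j_meet (meet_branches he hc ec ey cy').
rewrite m_yy' in gz; apply: greatest_leaf_equiv gz => l ll.
apply: left_of_meet_transfer (morph_tle hj cy') (morph_tle hj ca) ll.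
  by rewrite -j_meet (morph_tle hj (succ_le hc)).
by rewrite -j_meet (inj_eq inj_j) succ_neq.
Qed.
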